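(* Let $\mathcal A$ be cocomplete, $(M,\eta)$ a pointed endofunctor, and $\lambda:M(H\times\mathrm{Id})\to(H\times\mathrm{Id})M$ a distributive law of $(M,\eta)$ over the copointed functor $(H\times\mathrm{Id},\pi_1)$, with $\lambda$-interpretation $b:MC\to C$. Then $c^{-1}\cdot Hb:HMC\to C$ is a completely iterative algebra for $HM$.
   Context: $\mathcal A$ has binary products and coproducts; $H:\mathcal A\to\mathcal A$ is a functor with terminal coalgebra $c:C\to HC$ (an isomorphism by Lambek's lemma). A pointed endofunctor is a functor $M$ with a natural transformation $\eta:\mathrm{Id}\to M$. A distributive law of $(M,\eta)$ over the copointed functor $(D,\varepsilon)=(H\times\mathrm{Id},\pi_1)$ is a natural transformation $\lambda:MD\to DM$ with $\lambda\cdot\eta D=D\eta$ and $\varepsilon M\cdot\lambda=M\varepsilon$. Its $\lambda$-interpretation is the unique $b:MC\to C$ with $c\cdot b=Hb\cdot\pi_0\cdot\lambda_C\cdot M\langle c,\mathrm{id}_C\rangle$; $(C,b)$ then satisfies $b\cdot\eta_C=\mathrm{id}_C$. A $G$-algebra $a:GA\to A$ is a completely iterative algebra if every $e:X\to GX+A$ has a unique $e^\dagger:X\to A$ with $e^\dagger=[a,\mathrm{id}_A]\cdot(Ge^\dagger+\mathrm{id}_A)\cdot e$. *)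

Set Implicit Arguments.
Unset Strict Implicit.

Record Category := {
  Ob :> Type;
  Hom : Ob -> Ob -> Type;
  comp : forall {X Y Z : Ob}, Hom Y Z -> Hom X Y -> Hom X Z;
  idm : forall X : Ob, Hom X X;
  comp_assoc : forall X Y Z W (f : Hom X Y) (g : Hom Y Z) (h : Hom Z W),
      comp h (comp g f) = comp (comp h g) f;
  comp_id_l : forall X Y (f : Hom X Y), comp (idm Y) f = f;
  comp_id_r : forall X Y (f : Hom X Y), comp f (idm X) = f
}.
Arguments Hom {c} _ _.
Arguments comp {c X Y Z} _ _.
Arguments idm {c} X.
Infix "∘" := comp (at level 40, left associativity).

Record Endofunctor (A : Category) := {
  fob :> A -> A;
  fmap : forall {X Y : A}, Hom X Y -> Hom (fob X) (fob Y);
  fmap_id : forall X : A, fmap (idm X) = idm (fob X);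
  fmap_comp : forall (X Y Z : A) (f : Hom X Y) (g : Hom Y Z),
      fmap (g ∘ f) = fmap g ∘ fmap f
}.
Arguments fmap {A} e {X Y} _.

Definition IdFunctor (A : Category) : Endofunctor A.
Proof.
  refine {| fob := fun X => X; fmap := fun X Y f => f |}; reflexivity.
Defined.

Definition CompFunctor (A : Category) (G F : Endofunctor A) : Endofunctor A.
Proof.
  refine {| fob := fun X => G (F X); fmap := fun X Y f => fmap G (fmap F f) |}.
  - intros X. rewrite !fmap_id. reflexivity.
  - intros X Y Z f g. rewrite !fmap_comp. reflexivity.
Defined.

Record BinProducts (A : Category) := {
  prod : A -> A -> A;
  pi0 : forall X Y : A, Hom (prod X Y) X;
  pi1 : forall X Y : A, Hom (prod X Y) Y;
  pair : forall {Z X Y : A}, Hom Z X -> Hom Z Y -> Hom Z (prod X Y);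
  pair_pi0 : forall Z X Y (f : Hom Z X) (g : Hom Z Y), pi0 X Y ∘ pair f g = f;
  pair_pi1 : forall Z X Y (f : Hom Z X) (g : Hom Z Y), pi1 X Y ∘ pair f g = g;
  pair_uniq : forall Z X Y (f : Hom Z X) (g : Hom Z Y) (h : Hom Z (prod X Y)),
      pi0 X Y ∘ h = f -> pi1 X Y ∘ h = g -> h = pair f g
}.
Arguments prod {A} _ _ _.
Arguments pi0 {A} _ X Y.
Arguments pi1 {A} _ X Y.
Arguments pair {A} _ {Z X Y} _ _.

Definition prod_map (A : Category) (P : BinProducts A) (X X' Y Y' : A)
  (f : Hom X X') (g : Hom Y Y') : Hom (prod P X Y) (prod P X' Y') :=
  pair P (f ∘ pi0 P X Y) (g ∘ pi1 P X Y).

Record BinCoproducts (A : Category) := {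
  coprod : A -> A -> A;
  inl : forall X Y : A, Hom X (coprod X Y);
  inr : forall X Y : A, Hom Y (coprod X Y);
  copair : forall {X Y Z : A}, Hom X Z -> Hom Y Z -> Hom (coprod X Y) Z;
  copair_inl : forall X Y Z (f : Hom X Z) (g : Hom Y Z), copair f g ∘ inl X Y = f;
  copair_inr : forall X Y Z (f : Hom X Z) (g : Hom Y Z), copair f g ∘ inr X Y = g;
  copair_uniq : forall X Y Z (f : Hom X Z) (g : Hom Y Z) (h : Hom (coprod X Y) Z),
      h ∘ inl X Y = f -> h ∘ inr X Y = g -> h = copair f g
}.
Arguments coprod {A} _ _ _.
Arguments inl {A} _ X Y.
Arguments inr {A} _ X Y.
Arguments copair {A} _ {X Y Z} _ _.

Definition coprod_map (A : Category) (S : BinCoproducts A) (X X' Y Y' : A)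
  (f : Hom X X') (g : Hom Y Y') : Hom (coprod S X Y) (coprod S X' Y') :=
  copair S (inl S X' Y' ∘ f) (inr S X' Y' ∘ g).

Record SmallCategory := {
  sOb : Set;
  sHom : sOb -> sOb -> Set;
  scomp : forall {i j k : sOb}, sHom j k -> sHom i j -> sHom i k;
  sid : forall i : sOb, sHom i i;
  scomp_assoc : forall i j k l (u : sHom i j) (v : sHom j k) (w : sHom k l),
      scomp w (scomp v u) = scomp (scomp w v) u;
  scomp_id_l : forall i j (u : sHom i j), scomp (sid j) u = u;
  scomp_id_r : forall i j (u : sHom i j), scomp u (sid i) = u
}.
Arguments sHom {s} _ _.
Arguments scomp {s i j k} _ _.
Arguments sid {s} i.

Record Diagram (J : SmallCategory) (A : Category) := {
  dob : sOb J -> A;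
  dmap : forall {i j : sOb J}, sHom i j -> Hom (dob i) (dob j);
  dmap_id : forall i, dmap (sid i) = idm (dob i);
  dmap_comp : forall i j k (u : sHom i j) (v : sHom j k),
      dmap (scomp v u) = dmap v ∘ dmap u
}.
Arguments dob {J A} d _.
Arguments dmap {J A} d {i j} _.

Definition is_cocone {J : SmallCategory} {A : Category} (D : Diagram J A)
  (L : A) (x : forall i, Hom (dob D i) L) : Prop :=
  forall i j (u : sHom i j), x j ∘ dmap D u = x i.
Arguments is_cocone {J A} D L x.

Definition has_colimit (J : SmallCategory) (A : Category) (D : Diagram J A) : Prop :=
  exists (L : A) (iota : forall i, Hom (dob D i) L),
    is_cocone D L iota /\
    forall (X : A) (x : forall i, Hom (dob D i) X), is_cocone D X x ->
      exists h : Hom L X, (forall i, h ∘ iota i = x i) /\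
        forall h' : Hom L X, (forall i, h' ∘ iota i = x i) -> h' = h.

Definition cocomplete (A : Category) : Prop :=
  forall (J : SmallCategory) (D : Diagram J A), has_colimit D.

Definition terminal_coalgebra (A : Category) (H : Endofunctor A) (C : A)
  (c : Hom C (H C)) : Prop :=
  forall (X : A) (e : Hom X (H X)),
    exists h : Hom X C, c ∘ h = fmap H h ∘ e /\
      forall h' : Hom X C, c ∘ h' = fmap H h' ∘ e -> h' = h.

Record PointedEndofunctor (A : Category) := {
  pf :> Endofunctor A;
  eta : forall X : A, Hom X (pf X);
  eta_nat : forall (X Y : A) (f : Hom X Y), fmap pf f ∘ eta X = eta Y ∘ f
}.
Arguments eta {A} _ X.

(** Distributive law  lambda : M D -> D M  of (M, eta) over the copointed functor
    (D, eps) = (H × Id, pi1), written out componentwise: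
    D X = H X × X,  D f = H f × f,  eps_X = pi1. *)
Definition distributive_law (A : Category) (P : BinProducts A) (H : Endofunctor A)
  (M : PointedEndofunctor A)
  (lam : forall X : A, Hom (M (prod P (H X) X)) (prod P (H (M X)) (M X))) : Prop :=
  (forall (X Y : A) (f : Hom X Y),
      lam Y ∘ fmap M (prod_map P (fmap H f) f)
      = prod_map P (fmap H (fmap M f)) (fmap M f) ∘ lam X) /\
  (* lambda . eta D = D eta *)
  (forall X : A,
      lam X ∘ eta M (prod P (H X) X) = prod_map P (fmap H (eta M X)) (eta M X)) /\
  (* eps M . lambda = M eps *)
  (forall X : A,
      pi1 P (H (M X)) (M X) ∘ lam X = fmap M (pi1 P (H X) X)).

(** b : M C -> C is the lambda-interpretation: the unique b with
    c . b = H b . pi0 . lambda_C . M <c, id>.  (Uniqueness is automatic by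
    terminality of c, so we only record the defining equation.) *)
Definition lambda_interpretation (A : Category) (P : BinProducts A) (H : Endofunctor A)
  (M : PointedEndofunctor A)
  (lam : forall X : A, Hom (M (prod P (H X) X)) (prod P (H (M X)) (M X)))
  (C : A) (c : Hom C (H C)) (b : Hom (M C) C) : Prop :=
  c ∘ b = fmap H b ∘ pi0 P (H (M C)) (M C) ∘ lam C ∘ fmap M (pair P c (idm C)).

Definition completely_iterative (A : Category) (S : BinCoproducts A) (G : Endofunctor A)
  (A0 : A) (a : Hom (G A0) A0) : Prop :=
  forall (X : A) (e : Hom X (coprod S (G X) A0)),
    exists s : Hom X A0,
      s = copair S a (idm A0) ∘ coprod_map S (fmap G s) (idm A0) ∘ e /\
      forall s' : Hom X A0,
        s' = copair S a (idm A0) ∘ coprod_map S (fmap G s') (idm A0) ∘ e -> s' = s.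

Arguments terminal_coalgebra {A} H C c.
Arguments distributive_law {A} P H M lam.
Arguments lambda_interpretation {A} P H M lam C c b.
Arguments completely_iterative {A} S G A0 a.
Arguments has_colimit {J A} D.


(* Given f : X -> H M X, lifting f repeatedly through the distributive law gives
   maps g_n : M^n X -> H M^(n+1) X.  On the countable coproduct of the M^n X
   (which exists by cocompleteness) they form one coalgebra, so there is a unique
   family k_n : M^n X -> C with c ∘ k_n = H k_(n+1) ∘ g_n; uniqueness forces
   k_n = k_(n+1) ∘ eta and then k_(n+1) = b ∘ M k_n, so k_0 is a solution of
   c ∘ s = H (b ∘ M s) ∘ f.  Conversely any solution s spawns the family
   s, b ∘ M s, ..., which gives uniqueness.  A flat equation X -> H M X + C
   reduces to this case on X + C by letting every parameter in C unfold along c;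
   here b ∘ eta = id is what makes parameters solve to themselves. *)

Lemma comp_rewrite_r {A : Category} {W X Y Z : A}
  {a : Hom Y Z} {b : Hom X Y} {d : Hom X Z} (E : a ∘ b = d) (r : Hom W X) :
  a ∘ (b ∘ r) = d ∘ r.
Proof. rewrite comp_assoc, E. reflexivity. Qed.

Ltac saturate E k :=
  lazymatch type of E with
  | forall _, _ => saturate open_constr:(E _) k
  | _ => k E
  end.

(* [crewrite E] rewrites with an equation [a ∘ b = d] inside a composite of any
   bracketing, by first normalising composites to right-nested form. *)
Tactic Notation "crewrite" open_constr(E) :=
  repeat rewrite <- comp_assoc;
  first [saturate E ltac:(fun E' => rewrite (comp_rewrite_r E')) | rewrite E];
  repeat rewrite <- comp_assoc.

Tactic Notation "crewrite" "<-" open_constr(E) :=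
  repeat rewrite <- comp_assoc;
  first [saturate E ltac:(fun E' => rewrite (comp_rewrite_r (eq_sym E'))) | rewrite <- E];
  repeat rewrite <- comp_assoc.

Section Products.
Context {A : Category} (P : BinProducts A).

Lemma pair_comp {W Z X Y : A} (f : Hom Z X) (g : Hom Z Y) (u : Hom W Z) :
  pair P f g ∘ u = pair P (f ∘ u) (g ∘ u).
Proof.
  apply pair_uniq; rewrite comp_assoc; [rewrite pair_pi0 | rewrite pair_pi1];
    reflexivity.
Qed.

Lemma prod_map_pair {Z X X' Y Y' : A} (a : Hom X X') (a' : Hom Y Y')
  (f : Hom Z X) (g : Hom Z Y) :
  prod_map P a a' ∘ pair P f g = pair P (a ∘ f) (a' ∘ g).
Proof.
  unfold prod_map. rewrite pair_comp. crewrite pair_pi0. crewrite pair_pi1.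
  reflexivity.
Qed.

Lemma pi0_prod_map {X X' Y Y' : A} (a : Hom X X') (a' : Hom Y Y') :
  pi0 P X' Y' ∘ prod_map P a a' = a ∘ pi0 P X Y.
Proof. apply pair_pi0. Qed.

End Products.

Section Coproducts.
Context {A : Category} (S : BinCoproducts A).

Lemma comp_copair {X Y Z W : A} (f : Hom X Z) (g : Hom Y Z) (h : Hom Z W) :
  h ∘ copair S f g = copair S (h ∘ f) (h ∘ g).
Proof.
  apply copair_uniq; [crewrite copair_inl | crewrite copair_inr]; reflexivity.
Qed.

Lemma copair_ext {X Y Z : A} (h h' : Hom (coprod S X Y) Z) :
  h ∘ inl S X Y = h' ∘ inl S X Y -> h ∘ inr S X Y = h' ∘ inr S X Y -> h = h'.
Proof.
  intros El Er.
  transitivity (copair S (h ∘ inl S X Y) (h ∘ inr S X Y)).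
  - apply copair_uniq; reflexivity.
  - symmetry. apply copair_uniq; symmetry; assumption.
Qed.

Lemma copair_coprod_map {X X' Y Y' Z : A} (f : Hom X' Z) (g : Hom Y' Z)
  (f' : Hom X X') (g' : Hom Y Y') :
  copair S f g ∘ coprod_map S f' g' = copair S (f ∘ f') (g ∘ g').
Proof.
  unfold coprod_map. rewrite comp_copair. crewrite copair_inl. crewrite copair_inr.
  reflexivity.
Qed.

End Coproducts.

Lemma iso_comp_iff {A : Category} {X Y Z : A} (c : Hom Y Z) (cinv : Hom Z Y)
  (Hcinv1 : cinv ∘ c = idm Y) (Hcinv2 : c ∘ cinv = idm Z) (s : Hom X Y) (t : Hom X Z) :
  s = cinv ∘ t <-> c ∘ s = t.
Proof.
  split; intros E.
  - rewrite E, comp_assoc, Hcinv2. apply comp_id_l.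
  - rewrite <- E, comp_assoc, Hcinv1. symmetry. apply comp_id_l.
Qed.

Definition discrete_nat : SmallCategory.
Proof.
  refine {| sOb := nat; sHom := fun i j => i = j;
            scomp := fun i j k v u => eq_trans u v; sid := fun i => eq_refl |}.
  - intros; destruct u, v, w; reflexivity.
  - intros; destruct u; reflexivity.
  - intros; destruct u; reflexivity.
Defined.

Definition discrete_diagram {A : Category} (Y : nat -> A) : Diagram discrete_nat A.
Proof.
  refine (@Build_Diagram discrete_nat A Y
    (fun i j (u : i = j) =>
       match u in _ = j return Hom (Y i) (Y j) with eq_refl => idm (Y i) end) _ _).
  - reflexivity.
  - intros i j k u v; destruct u, v; simpl. symmetry. apply comp_id_l.
Defined.

Definition is_nat_coproduct {A : Category} (Y : nat -> A) (L : A)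
  (iota : forall n, Hom (Y n) L) : Prop :=
  forall (Z : A) (x : forall n, Hom (Y n) Z),
    exists h : Hom L Z, (forall n, h ∘ iota n = x n) /\
      forall h' : Hom L Z, (forall n, h' ∘ iota n = x n) -> h' = h.

Lemma cocomplete_nat_coproduct {A : Category} (Y : nat -> A) :
  cocomplete A -> exists L iota, @is_nat_coproduct A Y L iota.
Proof.
  intros Hcoc. destruct (Hcoc discrete_nat (discrete_diagram Y)) as [L [iota [_ U]]].
  exists L, iota. intros Z x. apply U.
  intros i j u. destruct u. apply comp_id_r.
Qed.

Lemma nat_coproduct_ext {A : Category} {Y : nat -> A} {L : A} {iota}
  (Hcop : @is_nat_coproduct A Y L iota) {Z : A} (h h' : Hom L Z) :
  (forall n, h ∘ iota n = h' ∘ iota n) -> h = h'.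
Proof.
  intros E. destruct (Hcop Z (fun n => h' ∘ iota n)) as [k [_ U]].
  rewrite (U h E), (U h' (fun n => eq_refl)). reflexivity.
Qed.

Section TerminalCoalgebra.
Context {A : Category} (H : Endofunctor A) (C : A) (c : Hom C (H C))
  (Hterm : terminal_coalgebra H C c).

Lemma terminal_coalgebra_unique {X : A} (e : Hom X (H X)) (h h' : Hom X C) :
  c ∘ h = fmap H h ∘ e -> c ∘ h' = fmap H h' ∘ e -> h = h'.
Proof.
  intros Eh Eh'. destruct (Hterm X e) as [k [_ U]].
  rewrite (U h Eh), (U h' Eh'). reflexivity.
Qed.

Lemma terminal_coalgebra_endo_id (h : Hom C C) :
  c ∘ h = fmap H h ∘ c -> h = idm C.
Proof.
  intros Eh. apply (terminal_coalgebra_unique c); [exact Eh |].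
  rewrite fmap_id, comp_id_l, comp_id_r. reflexivity.
Qed.

Section Chains.
Context (Y : nat -> A) (g : forall n, Hom (Y n) (H (Y (S n)))).

Definition chain_solution (k : forall n, Hom (Y n) C) : Prop :=
  forall n, c ∘ k n = fmap H (k (S n)) ∘ g n.

Section ChainCoalgebra.
Context (L : A) (iota : forall n, Hom (Y n) L) (Hcop : is_nat_coproduct Y L iota)
  (gam : Hom L (H L)) (Hgam : forall n, gam ∘ iota n = fmap H (iota (S n)) ∘ g n).

Lemma chain_solution_coalgebra_morphism (h : Hom L C) :
  c ∘ h = fmap H h ∘ gam <-> chain_solution (fun n => h ∘ iota n).
Proof.
  unfold chain_solution. split.
  - intros Eh n. crewrite Eh. crewrite Hgam. crewrite <- fmap_comp. reflexivity.
  - intros Eh. apply (nat_coproduct_ext Hcop). intros n.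
    crewrite Eh. crewrite Hgam. crewrite <- fmap_comp. reflexivity.
Qed.

End ChainCoalgebra.

Hypothesis Hcoc : cocomplete A.

Lemma chain_solution_exists : exists k, chain_solution k.
Proof.
  destruct (cocomplete_nat_coproduct Y Hcoc) as [L [iota Hcop]].
  destruct (Hcop (H L) (fun n => fmap H (iota (S n)) ∘ g n)) as [gam [Hgam _]].
  destruct (Hterm L gam) as [h [Eh _]].
  exists (fun n => h ∘ iota n).
  apply (chain_solution_coalgebra_morphism L iota Hcop gam Hgam). exact Eh.
Qed.

Lemma chain_solution_unique (k k' : forall n, Hom (Y n) C) :
  chain_solution k -> chain_solution k' -> forall n, k n = k' n.
Proof.
  intros Ek Ek' n.
  destruct (cocomplete_nat_coproduct Y Hcoc) as [L [iota Hcop]].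
  destruct (Hcop (H L) (fun n => fmap H (iota (S n)) ∘ g n)) as [gam [Hgam _]].
  destruct (Hcop C k) as [K [HK _]]. destruct (Hcop C k') as [K' [HK' _]].
  rewrite <- HK, <- HK'. f_equal.
  apply (terminal_coalgebra_unique gam);
    apply (chain_solution_coalgebra_morphism L iota Hcop gam Hgam); intros m.
  - rewrite !HK. apply Ek.
  - rewrite !HK'. apply Ek'.
Qed.

End Chains.
End TerminalCoalgebra.

Section Interpretation.
Context {A : Category} (P : BinProducts A) (H : Endofunctor A) (C : A)
  (c : Hom C (H C)) (Hterm : terminal_coalgebra H C c) (M : PointedEndofunctor A)
  (lam : forall X : A, Hom (M (prod P (H X) X)) (prod P (H (M X)) (M X)))
  (Hlam : distributive_law P H M lam)
  (b : Hom (M C) C) (Hb : lambda_interpretation P H M lam C c b).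

Lemma lam_natural {X Y : A} (f : Hom X Y) :
  lam Y ∘ fmap M (prod_map P (fmap H f) f) = prod_map P (fmap H (fmap M f)) (fmap M f) ∘ lam X.
Proof. apply Hlam. Qed.

Lemma lam_eta (X : A) :
  lam X ∘ eta M (prod P (H X) X) = prod_map P (fmap H (eta M X)) (eta M X).
Proof. apply Hlam. Qed.

Lemma interpretation_eta : b ∘ eta M C = idm C.
Proof.
  apply (terminal_coalgebra_endo_id H C c Hterm).
  crewrite Hb. crewrite eta_nat. crewrite lam_eta. crewrite prod_map_pair.
  crewrite pair_pi0. crewrite <- fmap_comp. reflexivity.
Qed.

Definition lam_lift {Z : A} (g : Hom Z (H (M Z))) : Hom (M Z) (H (M (M Z))) :=
  pi0 P _ _ ∘ lam (M Z) ∘ fmap M (pair P g (eta M Z)).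

Lemma lam_lift_eta {Z : A} (g : Hom Z (H (M Z))) :
  lam_lift g ∘ eta M Z = fmap H (eta M (M Z)) ∘ g.
Proof.
  unfold lam_lift. crewrite eta_nat. crewrite lam_eta. crewrite prod_map_pair.
  crewrite pair_pi0. reflexivity.
Qed.

Lemma interpretation_lift {Z : A} (g : Hom Z (H (M Z))) (u : Hom Z C) (v : Hom (M Z) C) :
  c ∘ u = fmap H v ∘ g -> u = v ∘ eta M Z ->
  c ∘ (b ∘ fmap M u) = fmap H (b ∘ fmap M v) ∘ lam_lift g.
Proof.
  intros Eu Ev.
  assert (Epair : pair P c (idm C) ∘ u = prod_map P (fmap H v) v ∘ pair P g (eta M Z)).
  { rewrite prod_map_pair, pair_comp, comp_id_l, Eu, <- Ev. reflexivity. }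
  unfold lam_lift. crewrite Hb. crewrite <- fmap_comp. rewrite Epair, fmap_comp.
  crewrite lam_natural. crewrite pi0_prod_map. rewrite !fmap_comp.
  repeat rewrite <- comp_assoc. reflexivity.
Qed.

Section Corecursion.
Context (X : A) (f : Hom X (H (M X))).

Fixpoint iter_M (n : nat) : A :=
  match n with 0 => X | S m => M (iter_M m) end.

Fixpoint lam_chain (n : nat) : Hom (iter_M n) (H (iter_M (S n))) :=
  match n with 0 => f | S m => lam_lift (lam_chain m) end.

Fixpoint iter_interpretation (s : Hom X C) (n : nat) : Hom (iter_M n) C :=
  match n with 0 => s | S m => b ∘ fmap M (iter_interpretation s m) end.

Lemma iter_interpretation_eta (s : Hom X C) (n : nat) :
  iter_interpretation s n = iter_interpretation s (S n) ∘ eta M (iter_M n).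
Proof.
  simpl. crewrite eta_nat. crewrite interpretation_eta. symmetry. apply comp_id_l.
Qed.

Lemma iter_interpretation_chain_solution (s : Hom X C) :
  c ∘ s = fmap H (b ∘ fmap M s) ∘ f ->
  chain_solution H C c iter_M lam_chain (iter_interpretation s).
Proof.
  intros Es n. induction n as [| n IH]; [exact Es |].
  apply interpretation_lift; [exact IH | apply iter_interpretation_eta].
Qed.

Hypothesis Hcoc : cocomplete A.

Lemma interpretation_corecursion_exists :
  exists s : Hom X C, c ∘ s = fmap H (b ∘ fmap M s) ∘ f.
Proof.
  destruct (chain_solution_exists H C c Hterm iter_M lam_chain Hcoc) as [k Ek].
  assert (Keta : forall n, k n = k (S n) ∘ eta M (iter_M n)).
  { intros n. symmetry. revert n.
    apply (chain_solution_unique H C c Hterm iter_M lam_chain Hcoc); [| exact Ek].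
    intros n. crewrite (Ek (S n)). cbn [lam_chain iter_M]. crewrite lam_lift_eta.
    crewrite <- fmap_comp. reflexivity. }
  assert (Kb : forall n, k (S n) = b ∘ fmap M (k n)).
  { apply (chain_solution_unique H C c Hterm (fun n => iter_M (S n))
             (fun n => lam_chain (S n)) Hcoc).
    - intros n. apply Ek.
    - intros n. apply interpretation_lift; [apply Ek | apply Keta]. }
  exists (k 0). pose proof (Ek 0) as E0. rewrite (Kb 0) in E0. exact E0.
Qed.

Lemma interpretation_corecursion_unique (s s' : Hom X C) :
  c ∘ s = fmap H (b ∘ fmap M s) ∘ f -> c ∘ s' = fmap H (b ∘ fmap M s') ∘ f -> s = s'.
Proof.
  intros Es Es'.
  apply (chain_solution_unique H C c Hterm iter_M lam_chain Hcoc
           (iter_interpretation s) (iter_interpretation s')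
           (iter_interpretation_chain_solution s Es)
           (iter_interpretation_chain_solution s' Es') 0).
Qed.

End Corecursion.
End Interpretation.

Section FlatEquations.
Context {A : Category} (P : BinProducts A) (S : BinCoproducts A) (Hcoc : cocomplete A)
  (H : Endofunctor A) (C : A) (c : Hom C (H C)) (Hterm : terminal_coalgebra H C c)
  (M : PointedEndofunctor A)
  (lam : forall X : A, Hom (M (prod P (H X) X)) (prod P (H (M X)) (M X)))
  (Hlam : distributive_law P H M lam)
  (b : Hom (M C) C) (Hb : lambda_interpretation P H M lam C c b).
Context {X : A} (e : Hom X (coprod S (H (M X)) C)).

Definition parameter_coalgebra : Hom C (H (M (coprod S X C))) :=
  fmap H (fmap M (inr S X C) ∘ eta M C) ∘ c.

(* The parameters in [C] are turned into variables, each unfolding to itself via [c]. *)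
Definition absorb_parameters : Hom (coprod S X C) (H (M (coprod S X C))) :=
  copair S (copair S (fmap H (fmap M (inl S X C))) (parameter_coalgebra) ∘ e)
    (parameter_coalgebra).

Lemma parameter_coalgebra_natural (t : Hom (coprod S X C) C) :
  fmap H (b ∘ fmap M t) ∘ parameter_coalgebra = fmap H (t ∘ inr S X C) ∘ c.
Proof.
  assert (Einr : b ∘ fmap M t ∘ (fmap M (inr S X C) ∘ eta M C) = t ∘ inr S X C).
  { crewrite <- fmap_comp. crewrite eta_nat.
    crewrite (interpretation_eta P H C c Hterm M lam Hlam b Hb). apply comp_id_l. }
  unfold parameter_coalgebra. rewrite comp_assoc, <- fmap_comp, Einr. reflexivity.
Qed.

Lemma parameter_coalgebra_solution (t : Hom (coprod S X C) C) :
  t ∘ inr S X C = idm C -> fmap H (b ∘ fmap M t) ∘ parameter_coalgebra = c.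
Proof.
  intros Et. rewrite parameter_coalgebra_natural, Et, fmap_id. apply comp_id_l.
Qed.

Lemma absorb_parameters_solution (t : Hom (coprod S X C) C) :
  t ∘ inr S X C = idm C ->
  (c ∘ t = fmap H (b ∘ fmap M t) ∘ absorb_parameters <->
   c ∘ (t ∘ inl S X C) = copair S (fmap H (b ∘ fmap M (t ∘ inl S X C))) c ∘ e).
Proof.
  intros Et.
  assert (Einl : fmap H (b ∘ fmap M t) ∘ absorb_parameters ∘ inl S X C
                 = copair S (fmap H (b ∘ fmap M (t ∘ inl S X C))) c ∘ e).
  { unfold absorb_parameters. crewrite copair_inl. rewrite comp_assoc, comp_copair.
    rewrite (parameter_coalgebra_solution t Et), !fmap_comp, !comp_assoc.
    reflexivity. }
  assert (Einr : fmap H (b ∘ fmap M t) ∘ absorb_parameters ∘ inr S X C = c).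
  { unfold absorb_parameters. crewrite copair_inr.
    apply parameter_coalgebra_solution, Et. }
  split.
  - intros Es. rewrite comp_assoc, Es. exact Einl.
  - intros Es. apply (copair_ext S).
    + rewrite Einl, <- comp_assoc. exact Es.
    + rewrite Einr, <- comp_assoc, Et. apply comp_id_r.
Qed.

Lemma interpretation_solution_exists :
  exists s : Hom X C, c ∘ s = copair S (fmap H (b ∘ fmap M s)) c ∘ e.
Proof.
  destruct (interpretation_corecursion_exists P H C c Hterm M lam Hlam b Hb
              _ absorb_parameters Hcoc) as [t Et].
  assert (Etr : t ∘ inr S X C = idm C).
  { apply (terminal_coalgebra_endo_id H C c Hterm).
    rewrite comp_assoc, Et. unfold absorb_parameters. crewrite copair_inr.
    apply parameter_coalgebra_natural. }
  exists (t ∘ inl S X C). apply absorb_parameters_solution; assumption.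
Qed.

Lemma interpretation_solution_unique (s s' : Hom X C) :
  c ∘ s = copair S (fmap H (b ∘ fmap M s)) c ∘ e ->
  c ∘ s' = copair S (fmap H (b ∘ fmap M s')) c ∘ e -> s = s'.
Proof.
  intros Es Es'.
  rewrite <- (copair_inl S s (idm C)), <- (copair_inl S s' (idm C)). f_equal.
  apply (interpretation_corecursion_unique P H C c Hterm M lam Hlam b Hb
           _ absorb_parameters Hcoc);
    apply absorb_parameters_solution; try apply copair_inr;
    rewrite copair_inl; assumption.
Qed.

End FlatEquations.

Lemma iso_algebra_solution_iff {A : Category} (S : BinCoproducts A) (G H : Endofunctor A)
  (C : A) (c : Hom C (H C)) (cinv : Hom (H C) C)
  (Hcinv1 : cinv ∘ c = idm C) (Hcinv2 : c ∘ cinv = idm (H C)) (h : Hom (G C) (H C))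
  {X : A} (e : Hom X (coprod S (G X) C)) (s : Hom X C) :
  s = copair S (cinv ∘ h) (idm C) ∘ coprod_map S (fmap G s) (idm C) ∘ e <->
  c ∘ s = copair S (h ∘ fmap G s) c ∘ e.
Proof.
  rewrite copair_coprod_map, comp_id_l.
  replace (copair S (cinv ∘ h ∘ fmap G s) (idm C)) with (cinv ∘ copair S (h ∘ fmap G s) c).
  - rewrite <- comp_assoc. apply iso_comp_iff; assumption.
  - rewrite comp_copair, Hcinv1, comp_assoc. reflexivity.
Qed.

Theorem mainTheorem18
  (A : Category) (P : BinProducts A) (S : BinCoproducts A)
  (Hcocomplete : cocomplete A)
  (H : Endofunctor A) (C : A) (c : Hom C (H C))
  (Hterm : terminal_coalgebra H C c)
  (cinv : Hom (H C) C) (Hcinv1 : cinv ∘ c = idm C) (Hcinv2 : c ∘ cinv = idm (H C))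
  (M : PointedEndofunctor A)
  (lam : forall X : A, Hom (M (prod P (H X) X)) (prod P (H (M X)) (M X)))
  (Hlam : distributive_law P H M lam)
  (b : Hom (M C) C) (Hb : lambda_interpretation P H M lam C c b) :
  completely_iterative S (CompFunctor H M) C (cinv ∘ fmap H b).
Proof.
  intros X e.
  assert (Esol : forall s : Hom X C,
    s = copair S (cinv ∘ fmap H b) (idm C) ∘ coprod_map S (fmap (CompFunctor H M) s) (idm C) ∘ e
    <-> c ∘ s = copair S (fmap H (b ∘ fmap M s)) c ∘ e).
  { intros s. rewrite fmap_comp.
    exact (iso_algebra_solution_iff S (CompFunctor H M) H C c cinv Hcinv1 Hcinv2 (fmap H b) e s). }
  destruct (interpretation_solution_exists P S Hcocomplete H C c Hterm M lam Hlam b Hb e)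
    as [s Es].
  exists s. split.
  - apply Esol, Es.
  - intros s' Es'.
    apply (interpretation_solution_unique P S Hcocomplete H C c Hterm M lam Hlam b Hb e);
      [apply Esol, Es' | exact Es].
Qed.
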